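(* Let $f\in\mathbb{Z}[X]$ be a polynomial which is not a square in $\mathbb{C}[X]$. Then there exists a finite set $P_f$ of prime numbers such that for every finite set $P$ of prime numbers there are infinitely many $x\in\mathbb{Z}$ with (a) $p\nmid f(x)$ for every $p\in P\setminus P_f$, and (b) $v_p(f(x))\equiv1\pmod 2$ for some prime $p\notin P$.
   Context: $v_p$ denotes the $p$-adic valuation on $\mathbb{Q}^\times$. *)

From mathcomp Require Import all_boot all_order all_algebra all_field.
Set Implicit Arguments. Unset Strict Implicit. Unset Printing Implicit Defensive.
Import Order.TTheory GRing.Theory Num.Theory.
Local Open Scope ring_scope.

(* p-adic valuation of a nonzero integer z (value irrelevant when z = 0). *)
Definition vp (p : nat) (z : int) : nat := logn p `|z|%N.

Definition is_square_C (f : {poly int}) : Prop :=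
  exists g : {poly algC}, map_poly (intr : int -> algC) f = g ^+ 2.

(* Over Q, a nonzero f that is not a constant times a square has an irreducible
   factor of odd multiplicity e; clearing denominators gives c f = H^e K in Z[X]
   with H coprime to K and, being separable, to H'.  Writing H = a + X G, the
   values H(a m t) = a (1 + m t G(a m t)) show (Schur) that some H(r) has a prime
   divisor q prime to any given m.  As q does not divide H'(r), one of r, r + q
   gives v_q(H) = 1 on a whole class mod q^2, and there v_q(f) = e is odd.  Taking
   P_f to be the prime divisors of f(x_0) for a fixed x_0 with f(x_0) <> 0, the
   Chinese remainder theorem also puts x in the class of x_0 modulo the primes of
   P, which keeps f(x) prime to those outside P_f. *)

From mathcomp Require Import all_boot all_order all_algebra all_field.
From Stdlib Require Import Classical.
From mathcomp Require Import zify ring.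
Set Implicit Arguments. Unset Strict Implicit. Unset Printing Implicit Defensive.
Import Order.TTheory GRing.Theory Num.Theory.
Local Open Scope ring_scope.

Section FieldPolynomials.

Variable F : fieldType.
Implicit Types p q h k : {poly F}.

Lemma size_mul_gt p q : q != 0 -> (1 < size p)%N -> (size q < size (p * q)%R)%N.
Proof.
move=> q0 p_gt1; have p0 : p != 0 by rewrite -size_poly_gt0 ltnW.
have := size_poly_gt0 q; rewrite q0 size_mul //.
by move: (size p) (size q) p_gt1 => a b; lia.
Qed.

Lemma irredp_dvd_exists p : (1 < size p)%N -> exists2 h, irreducible_poly h & h %| p.
Proof.
have [n] := ubnP (size p); elim: n => // n IH in p *; rewrite ltnS => le_pn p_gt1.
have [irr_p|red_p] := classic (irreducible_poly p); first by exists p.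
have [q [q_neq1 qp not_qp]] : exists q, [/\ size q != 1%N, q %| p & ~~ (q %= p)].
  apply: NNPP => none; apply: red_p; split=> // q q_neq1 qp.
  by apply/negPn/negP => not_qp; apply: none; exists q.
have p0 : p != 0 by rewrite -size_poly_gt0 ltnW.
have q0 : q != 0 by apply: contraNneq p0 => q0; rewrite -dvd0p -q0.
have lt_qp : (size q < size p)%N.
  by rewrite ltn_neqAle dvdp_leq // andbT dvdp_size_eqp.
have q_gt1 : (1 < size q)%N by move: q_neq1 q0; rewrite -size_poly_gt0; lia.
have [h irr_h hq] := IH q (leq_trans lt_qp le_pn) q_gt1.
by exists h => //; apply: dvdp_trans hq qp.
Qed.

Lemma poly_multiplicity h p : (1 < size h)%N -> p != 0 ->
  exists e k, p = h ^+ e * k /\ ~~ (h %| k).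
Proof.
move=> h_gt1; have [n] := ubnP (size p); elim: n => // n IH in p *.
rewrite ltnS => le_pn p0.
have [/dvdpP[k pE]|not_hp] := boolP (h %| p); last by exists 0%N, p; rewrite mul1r.
have k0 : k != 0 by apply: contraNneq p0 => k0; rewrite pE k0 mul0r.
have lt_kn : (size k < n)%N by rewrite (leq_trans _ le_pn) // pE mulrC size_mul_gt.
have [e [k' [kE not_hk']]] := IH k lt_kn k0.
by exists e.+1, k'; rewrite pE kE exprSr mulrAC.
Qed.

Lemma odd_power_factor_or_square p : p != 0 ->
  (exists h e k, [/\ irreducible_poly h, odd e, coprimep h k & p = h ^+ e * k])
  \/ exists c g, p = c%:P * g ^+ 2.
Proof.
have [n] := ubnP (size p); elim: n => // n IH in p *; rewrite ltnS => le_pn p0.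
have [p_le1|p_gt1] := leqP (size p) 1.
  by right; exists p`_0, 1; rewrite expr1n mulr1 -size1_polyC.
have [h irr_h hp] := irredp_dvd_exists p_gt1.
have [e [k [pE not_hk]]] := poly_multiplicity irr_h.1 p0.
have cop_hk : coprimep h k by rewrite irreducible_poly_coprime.
have [odd_e|even_e] := boolP (odd e); first by left; exists h, e, k.
have [e' eE] : exists e', e = e'.+1.
  case: e pE {even_e} => [|e' _]; last by exists e'.
  by rewrite expr0 mul1r => pE; rewrite -pE hp in not_hk.
have k0 : k != 0 by apply: contraNneq p0 => k0; rewrite pE k0 mulr0.
have lt_kn : (size k < n)%N.
  have hk0 : h ^+ e' * k != 0 by rewrite mulf_neq0 // expf_neq0 // irredp_neq0.
  rewrite (leq_trans _ le_pn) // pE eE exprS -mulrA.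
  by rewrite (leq_ltn_trans _ (size_mul_gt hk0 irr_h.1)) // dvdp_leq // dvdp_mull.
case: (IH k lt_kn k0) => [[h1 [e1 [k1 [irr_h1 odd_e1 cop_h1k1 kE]]]]|[c [g kE]]].
  left; exists h1, e1, (h ^+ e * k1); split=> //; last by rewrite pE kE mulrCA.
  rewrite coprimepMr cop_h1k1 andbT coprimep_expr // coprimep_sym.
  rewrite irreducible_poly_coprime //; apply: contra not_hk => hh1.
  rewrite kE dvdp_mulr // (dvdp_trans hh1) // dvdp_exp ?dvdpp //.
  by case: e1 odd_e1 {kE}.
right; exists c, (h ^+ e./2 * g).
rewrite pE kE exprMn -exprM mulrCA; congr (_ * (h ^+ _ * _)).
by rewrite muln2 halfK (negPf even_e) subn0.
Qed.

Lemma irredp_coprime_deriv h : [pchar F] =i pred0 -> irreducible_poly h ->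
  coprimep h h^`().
Proof.
move=> F0 irr_h; rewrite irreducible_poly_coprime //.
have h_gt1 := irr_h.1.
have h'0 : h^`() != 0.
  have sE : (size h).-2.+1 = (size h).-1 by case: (size h) h_gt1 => [|[|s]].
  have : h^`()`_(size h).-2 != 0.
    rewrite coef_deriv sE -lead_coefE -mulr_natr.
    rewrite mulf_neq0 ?lead_coef_eq0 ?irredp_neq0 //.
    by rewrite (pcharf0P _).1 //; case: (size h) h_gt1 => [|[|s]].
  by apply: contraNneq => ->; rewrite coef0.
by rewrite gtNdvdp // lt_size_deriv // irredp_neq0.
Qed.

End FieldPolynomials.

Local Notation pZtoQ := (map_poly (intr : int -> rat)).

Lemma pZtoQ_inj : injective pZtoQ.
Proof. exact: map_inj_poly (@intr_inj _) (rmorph0 _). Qed.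

Lemma rat_poly_int_multiple (u : {poly rat}) :
  exists U : {poly int}, exists2 a : int, a%:~R != 0 :> rat & pZtoQ U = a%:~R *: u.
Proof.
have [U [a a0 uE]] := rat_poly_scale u.
have a0' : a%:~R != 0 :> rat by rewrite intr_eq0.
by exists U, a; rewrite // uE scalerA mulfV ?scale1r.
Qed.

Lemma nonsquare_int_factorization (f : {poly int}) : ~ is_square_C f ->
  exists (H K : {poly int}) (e : nat),
    [/\ (1 < size H)%N, coprimep (pZtoQ H) (pZtoQ K),
        coprimep (pZtoQ H) (pZtoQ H^`()), odd e
      & exists2 c : int, c != 0 & c%:P * f = H ^+ e * K].
Proof.
move=> nsq; have f0 : pZtoQ f != 0.
  apply/eqP => f0; apply: nsq; exists 0.
  have -> : f = 0 by apply: pZtoQ_inj; rewrite f0 map_poly0.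
  by rewrite map_poly0 expr2 mulr0.
have [[h [e [k [irr_h odd_e cop_hk fE]]]]|[c [g fE]]] := odd_power_factor_or_square f0.
  have [H [a a0 HE]] := rat_poly_int_multiple h.
  have [K [b b0 KE]] := rat_poly_int_multiple k.
  exists H, K, e; split=> //.
  - by rewrite -(size_map_inj_poly (@intr_inj rat) (rmorph0 _)) HE size_scale // irr_h.1.
  - by rewrite HE KE coprimepZl ?coprimepZr.
  - rewrite -deriv_map HE derivZ coprimepZl ?coprimepZr //.
    exact: irredp_coprime_deriv (pchar_num _) irr_h.
  exists (a ^+ e * b); first by rewrite mulf_neq0 ?expf_neq0 // -(intr_eq0 rat).
  apply: pZtoQ_inj; rewrite !rmorphM !rmorphXn /= !map_polyC /= HE KE fE.
  by rewrite -!mul_polyC exprMn mulrACA.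
case: nsq; exists ((sqrtC (ratr c))%:P * map_poly ratr g).
have -> : map_poly (intr : int -> algC) f = map_poly ratr (pZtoQ f).
  by rewrite -map_poly_comp; apply: eq_map_poly => x /=; rewrite ratr_int.
rewrite fE rmorphM rmorphXn /= map_polyC /= exprMn.
by rewrite -[(sqrtC _)%:P ^+ 2]rmorphXn /= sqrtCK.
Qed.

Lemma coprimep_dvdz_values (H K : {poly int}) : coprimep (pZtoQ H) (pZtoQ K) ->
  exists2 R : int, R != 0 &
    forall d x : int, (d %| H.[x])%Z -> (d %| K.[x])%Z -> (d %| R)%Z.
Proof.
case/Bezout_eq1_coprimepP => -[u v] /= uvE.
have [U [a a0 UE]] := rat_poly_int_multiple u.
have [V [b b0 VE]] := rat_poly_int_multiple v.
have UVE : b%:P * U * H + a%:P * V * K = (a * b)%:P.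
  apply: pZtoQ_inj; rewrite rmorphD !rmorphM /= !map_polyC /= UE VE.
  by rewrite -[RHS]mulr1 -uvE -!mul_polyC; ring.
exists (a * b); first by rewrite mulf_neq0 // -(intr_eq0 rat).
move=> d x dH dK; have := congr1 (horner^~ x) UVE.
by rewrite hornerD !hornerM !hornerC => <-; rewrite rpredD // dvdz_mull.
Qed.

Lemma dvdz_horner_sub (p : {poly int}) (x y : int) : (x - y %| p.[x] - p.[y])%Z.
Proof.
have /factor_theorem[q qE] : root (p - p.[y]%:P) y by rewrite /root !hornerE subrr.
by have := congr1 (horner^~ x) qE; rewrite !hornerE => ->; apply: dvdz_mull.
Qed.

Lemma dvdz_horner_congr (p : {poly int}) (d x y : int) :
  (d %| x - y)%Z -> (d %| p.[x])%Z = (d %| p.[y])%Z.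
Proof.
move=> dxy; rewrite -(subrK p.[y] p.[x]) rpredDl //.
exact: dvdz_trans dxy (dvdz_horner_sub p x y).
Qed.

Lemma horner_taylor2 (R : comNzRingType) (p : {poly R}) (r t : R) :
  exists s, p.[r + t] = p.[r] + t * p^`().[r] + t ^+ 2 * s.
Proof.
elim/poly_ind: p => [|p c [s IH]]; first by exists 0; rewrite deriv0 !horner0; ring.
exists (p^`().[r] + s * (r + t)).
by rewrite derivMXaddC !hornerMXaddC hornerD hornerMX IH; ring.
Qed.

Lemma logn_eq1 (q n : nat) : prime q -> (q %| n)%N -> ~~ (q ^ 2 %| n)%N ->
  logn q n = 1%N.
Proof.
move=> q_prime qn q2n.
have n_gt0 : (0 < n)%N by rewrite lt0n; apply: contraNneq q2n => ->.
move: qn q2n; rewrite -{1}(expn1 q) !pfactor_dvdn //; lia.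
Qed.

Lemma exists_logn_horner_eq1 (H : {poly int}) (q : nat) (r : int) :
  prime q -> (q%:Z %| H.[r])%Z -> ~~ (q%:Z %| H^`().[r])%Z ->
  exists x0 : int, forall x, (q%:Z ^+ 2 %| x - x0)%Z -> logn q `|H.[x]| = 1%N.
Proof.
move=> q_prime qHr qH'r; set Q := q%:Z.
have Q0 : Q != 0 by rewrite /Q eqz_nat -lt0n prime_gt0.
have QQ2 : (Q %| Q ^+ 2)%Z by rewrite dvdz_exp.
have [x0 [qHx0 q2Hx0]] : exists x0, (Q %| H.[x0])%Z /\ ~~ (Q ^+ 2 %| H.[x0])%Z.
  have [q2Hr|] := boolP (Q ^+ 2 %| H.[r])%Z; last by exists r.
  exists (r + Q); have [s ->] := horner_taylor2 H r Q.
  split; first by rewrite !rpredD ?dvdz_mulr.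
  apply: contra qH'r => q2Hx.
  have : (Q ^+ 2 %| Q * H^`().[r])%Z.
    have -> : Q * H^`().[r] = H.[r] + Q * H^`().[r] + Q ^+ 2 * s - H.[r] - Q ^+ 2 * s.
      by ring.
    by rewrite !rpredB // dvdz_mulr.
  by rewrite expr2 dvdz_mul2l.
exists x0 => x x_x0; apply: logn_eq1 => //.
  by rewrite -[q]/`|Q|%N -dvdzE (dvdz_horner_congr _ (dvdz_trans QQ2 x_x0)).
by rewrite -[(q ^ 2)%N]/`|Q ^+ 2|%N -dvdzE (dvdz_horner_congr _ x_x0).
Qed.

Lemma exists_nonroot (R : idomainType) (p : {poly R}) (g : nat -> R) :
  injective g -> p != 0 -> exists i, ~~ root p (g i).
Proof.
move=> g_inj p0; have : ~~ all (root p) [seq g i | i <- iota 0 (size p)].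
  apply/negP => roots; have := max_poly_roots p0 roots.
  by rewrite map_inj_uniq ?iota_uniq // size_map size_iota ltnn => /(_ isT).
by case/allPn => _ /mapP[i _ ->]; exists i.
Qed.

Lemma exists_prime_dvd_horner (H : {poly int}) (m : nat) :
  (1 < size H)%N -> (0 < m)%N ->
  exists q r, [/\ prime q, coprime q m & (q%:Z %| H.[r])%Z].
Proof.
move=> H_gt1 m_gt0; set a := H.[0].
have [a0|a0] := eqVneq a 0.
  have [q m_lt_q q_prime] := prime_above m.
  by exists q, 0; rewrite prime_coprime // gtnNdvd // -/a a0 dvdz0.
have [G HE] : exists G, H = G * 'X + a%:P.
  have /factor_theorem[G GE] : root (H - a%:P) 0 by rewrite /root !hornerE subrr.
  by exists G; rewrite -[H](subrK a%:P) GE polyC0 subr0.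
have G0 : G != 0.
  apply: contraTneq H_gt1 => G0.
  by rewrite HE G0 mul0r add0r size_polyC -leqNgt leq_b1.
pose M := (3 * m)%N%:Z.
have aM0 : a * M != 0 by rewrite mulf_neq0 // eqz_nat -lt0n muln_gt0.
have [i Gy] : exists i, ~~ root G (a * M * i.+1%:Z).
  by apply: exists_nonroot G0 => i j /(mulfI aM0)/eqP; rewrite eqz_nat => /eqP[].
set y := a * M * i.+1%:Z in Gy; set w := M * i.+1%:Z * G.[y].
have HyE : H.[y] = a * (1 + w) by rewrite HE hornerMXaddC /w /y; ring.
(* the factor 3 keeps [1 + w] away from [1] and [-1] *)
have w_ge3 : (3 <= `|w|)%N.
  have : (0 < `|G.[y]|)%N by rewrite absz_gt0.
  by rewrite /w !abszM /M !absz_nat; nia.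
have q_prime : prime (pdiv `|1 + w|) by apply: pdiv_prime; lia.
exists (pdiv `|1 + w|), y; split=> //; last by rewrite HyE dvdz_mull // dvdzE pdiv_dvd.
rewrite prime_coprime //; apply/negP => qm.
have qw : ((pdiv `|1 + w|)%:Z %| w)%Z.
  by apply/dvdz_mulr/dvdz_mulr; rewrite dvdzE /= dvdn_mull.
have : ((pdiv `|1 + w|)%:Z %| 1 + w - w)%Z by rewrite rpredB // dvdzE pdiv_dvd.
by rewrite addrK dvdz1 => /eqP /= q1; rewrite q1 in q_prime.
Qed.

Lemma exists_prime_logn_horner_eq1 (H : {poly int}) (m : nat) :
  (1 < size H)%N -> coprimep (pZtoQ H) (pZtoQ H^`()) -> (0 < m)%N ->
  exists q x0, [/\ prime q, coprime q m &
    forall x : int, (q%:Z ^+ 2 %| x - x0)%Z -> logn q `|H.[x]| = 1%N].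
Proof.
move=> H_gt1 cop_HH' m_gt0.
have [R R0 dvd_R] := coprimep_dvdz_values cop_HH'.
have [|q [r [q_prime]]] := exists_prime_dvd_horner (m := m * `|R|) H_gt1.
  by rewrite muln_gt0 m_gt0 absz_gt0.
rewrite coprimeMr => /andP[q_m q_R] qHr.
have qH'r : ~~ (q%:Z %| H^`().[r])%Z.
  by apply: contraL q_R => /(dvd_R _ _ qHr); rewrite dvdzE prime_coprime // => ->.
have [x0 Hx0] := exists_logn_horner_eq1 q_prime qHr qH'r.
by exists q, x0.
Qed.

Lemma zchinese_large (m n a b : int) (N : nat) : coprimez m n -> m * n != 0 ->
  exists x : int, [/\ (N <= `|x|)%N, (m %| x - a)%Z & (n %| x - b)%Z].
Proof.
move=> cop_mn mn0; set x1 := zchinese m n a b.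
have x1a : (m %| x1 - a)%Z by rewrite -eqz_mod_dvd zchinese_modl.
have x1b : (n %| x1 - b)%Z by rewrite -eqz_mod_dvd zchinese_modr.
pose t : nat := N + `|x1|; exists (x1 + m * n * t%:Z); split.
- have : (0 < `|(m * n)%R|)%N by rewrite absz_gt0.
  nia.
- by rewrite addrAC rpredD // -mulrA dvdz_mulr.
- by rewrite addrAC rpredD // mulrAC dvdz_mull.
Qed.

Lemma logn_mul_eq (q e : nat) (c y h k : int) : prime q -> c * y = h ^+ e * k ->
  coprime q `|c| -> coprime q `|k| -> logn q `|h| = 1%N ->
  y != 0 /\ logn q `|y| = e.
Proof.
move=> q_prime cyE q_c q_k q_h.
have nz z : coprime q `|z| -> z != 0.
  by apply: contraTneq => ->; rewrite prime_coprime // dvdn0.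
have c0 := nz c q_c; have k0 := nz k q_k.
have h0 : h != 0 by apply/eqP => h0; move: q_h; rewrite h0 logn0.
have y0 : y != 0.
  apply: contra_neq (mulf_neq0 (expf_neq0 e h0) k0) => y0.
  by rewrite -cyE y0 mulr0.
split=> //; have := congr1 (fun z : int => logn q `|z|) cyE.
rewrite /= !abszM abszX !lognM ?muln_gt0 ?expn_gt0 ?absz_gt0 ?c0 ?y0 ?h0 ?k0 //.
by rewrite lognX q_h (logn_coprime q_c) (logn_coprime q_k) muln1 addn0.
Qed.

Lemma logn_horner_factor (f H K : {poly int}) (c R : int) (e q : nat) (x : int) :
  prime q -> c%:P * f = H ^+ e * K -> coprime q `|c| -> coprime q `|R| ->
  (forall d : int, (d %| H.[x])%Z -> (d %| K.[x])%Z -> (d %| R)%Z) ->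
  logn q `|H.[x]| = 1%N -> f.[x] != 0 /\ logn q `|f.[x]| = e.
Proof.
move=> q_prime cfE q_c q_R dvd_R Hx.
have q_Kx : coprime q `|K.[x]|.
  have : (0 < logn q `|H.[x]|)%N by rewrite Hx.
  rewrite logn_gt0 mem_primes => /and3P[_ _ qHx].
  rewrite prime_coprime //; apply: contraL q_R => qKx.
  by rewrite prime_coprime // -[q]/`|q%:Z|%N -dvdzE dvd_R // dvdzE.
apply: logn_mul_eq q_prime _ q_c q_Kx Hx.
by move/(congr1 (horner^~ x)): cfE; rewrite /= !hornerM hornerC horner_exp.
Qed.

Lemma not_dvdz_horner_congr (f : {poly int}) (p : nat) (x a : int) :
  prime p -> (p%:Z %| x - a)%Z -> f.[a] != 0 -> p \notin primes `|f.[a]| ->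
  ~~ (p%:Z %| f.[x])%Z.
Proof.
move=> p_prime p_xa fa0; apply: contra => p_fx.
rewrite mem_primes p_prime absz_gt0 fa0 -[p]/`|p%:Z|%N -dvdzE.
by rewrite -(dvdz_horner_congr _ p_xa).
Qed.

Theorem lemma5p2 (f : {poly int}) :
  ~ is_square_C f ->
  exists Pf : seq nat, all prime Pf /\
    forall P : seq nat, all prime P ->
      forall N : nat, exists x : int, (N <= `|x|)%N /\
        (forall p : nat, prime p -> p \in P -> p \notin Pf ->
           ~~ (p%:Z %| f.[x])%Z) /\
        (f.[x] != 0 /\ exists p : nat, [/\ prime p, p \notin P & odd (vp p f.[x])]).
Proof.
move=> nsq.
have [H [K [e [H_gt1 cop_HK cop_HH' odd_e [c c0 cfE]]]]] :=
  nonsquare_int_factorization nsq.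
have [R R0 dvd_R] := coprimep_dvdz_values cop_HK.
have f0 : f != 0.
  by apply/eqP => f0; apply: nsq; exists 0; rewrite f0 map_poly0 expr2 mulr0.
have [i0 fa0] : exists i0 : nat, f.[i0%:Z] != 0.
  by apply: exists_nonroot f0 => i j /eqP; rewrite eqz_nat => /eqP.
set a := i0%:Z in fa0; exists (primes `|f.[a]|).
split=> [|P P_prime N]; first by apply/allP => p; rewrite mem_primes => /andP[].
pose Pi := \prod_(p <- P) p.
have Pi_dvd p : p \in P -> (p %| Pi)%N.
  by move=> pP; rewrite /Pi (big_rem p) //= dvdn_mulr.
have Pi_gt0 : (0 < Pi)%N.
  by rewrite /Pi big_seq prodn_cond_gt0 // => p /(allP P_prime)/prime_gt0.
have [|q [x0 [q_prime]]] :=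
  exists_prime_logn_horner_eq1 (m := `|c| * `|R| * Pi) H_gt1 cop_HH'.
  by rewrite !muln_gt0 !absz_gt0 c0 R0.
rewrite !coprimeMr => /andP[/andP[q_c q_R] q_Pi] Hx_x0.
have [||x [N_x x_x0 x_a]] := @zchinese_large (q%:Z ^+ 2) Pi%:Z x0 a N.
- by rewrite coprimez_pexpl // coprimezE.
- by rewrite -absz_gt0 abszM abszX /= muln_gt0 expn_gt0 prime_gt0.
exists x; split=> //; split.
  move=> p p_prime /Pi_dvd p_Pi; apply: not_dvdz_horner_congr fa0 => //.
  by apply: dvdz_trans x_a; rewrite dvdzE.
have [fx0 vq] := logn_horner_factor q_prime cfE q_c q_R (dvd_R^~ x) (Hx_x0 x x_x0).
split=> //; exists q; split=> //; last by rewrite /vp vq.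
by apply: contraL q_Pi => /Pi_dvd; rewrite prime_coprime // => ->.
Qed.
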